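(* Let $(X,f)$ be a dynamical system and $\mathbf{a}=(a_1,\dots,a_r)\in\mathbb{N}^r$. The following are equivalent: (1) $(X,f)$ is $\mathbf{a}$-transitive; (2) $(X,f)$ is $\nabla(\mathcal{F}[\mathbf{a}])$-point transitive; (3) $Trans(X,f)=Trans_{\nabla(\mathcal{F}[\mathbf{a}])}(X,f)\neq\emptyset$.
   Context: A dynamical system is a pair $(X,f)$ with $X$ a compact metric space and $f:X\to X$ continuous. $\mathbb{N}=\{1,2,\dots\}$, $\mathbb{Z}_+=\{0,1,2,\dots\}$. $N(U,V)=\{n\in\mathbb{N}: U\cap f^{-n}(V)\neq\emptyset\}$, $N(x,U)=\{n\in\mathbb{N}: f^n(x)\in U\}$. $(X,f)$ is transitive if $N(U,V)\neq\emptyset$ for all non-empty open $U,V$. A transitive point is an $x$ with $\omega(x,f)=X$; $Trans(X,f)$ is the set of transitive points. For a family $\mathcal{F}$ of subsets of $\mathbb{N}$, $x$ is an $\mathcal{F}$-transitive point if $N(x,U)\in\mathcal{F}$ for every non-empty open $U$; $Trans_{\mathcal{F}}(X,f)$ is the set of these, and $(X,f)$ is $\mathcal{F}$-point transitive if it is non-empty. For $F\subset\mathbb{N}$, $F-F=\{a-b:a,b\in F,\ a>b\}$ and $\nabla(\mathcal{F})=\{F\subset\mathbb{N}: F-F\in\mathcal{F}\}$. For $\mathbf{a}\in\mathbb{N}^r$, $(X,f)$ is $\mathbf{a}$-transitive if $(X^r,f^{a_1}\times\dots\times f^{a_r})$ is transitive. $\mathcal{F}[\mathbf{a}]$ is the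 collection of all $F\subset\mathbb{N}$ such that for every $(n_1,\dots,n_r)\in\mathbb{Z}_+^r$ there exists $k\in\mathbb{N}$ with $ka_i+n_i\in F$ for all $i=1,\dots,r$. *)

From Stdlib Require Import Reals Arith.
Open Scope R_scope.

Definition is_metric {X : Type} (d : X -> X -> R) : Prop :=
  (forall x y, 0 <= d x y) /\
  (forall x y, d x y = 0 <-> x = y) /\
  (forall x y, d x y = d y x) /\
  (forall x y z, d x z <= d x y + d y z).

Definition mopen {X : Type} (d : X -> X -> R) (U : X -> Prop) : Prop :=
  forall x, U x -> exists eps, 0 < eps /\ forall y, d x y < eps -> U y.

Definition mcompact {X : Type} (d : X -> X -> R) : Prop :=
  forall (I : Type) (U : I -> X -> Prop),
    (forall i, mopen d (U i)) -> (forall x, exists i, U i x) ->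
    exists l : list I, forall x, exists i, List.In i l /\ U i x.

Definition mcontinuous {X : Type} (d : X -> X -> R) (f : X -> X) : Prop :=
  forall x eps, 0 < eps -> exists delta, 0 < delta /\
    forall y, d x y < delta -> d (f x) (f y) < eps.

Definition iter {X : Type} (n : nat) (f : X -> X) (x : X) : X := Nat.iter n f x.

Definition transitive_top {T : Type} (opn : (T -> Prop) -> Prop) (g : T -> T) : Prop :=
  forall U V, opn U -> opn V -> (exists x, U x) -> (exists y, V y) ->
    exists n, (1 <= n)%nat /\ exists x, U x /\ V (iter n g x).

(* index set {0,...,r-1} and X^r with the product (= sup metric) topology *)
Definition idx (r : nat) := {i : nat | (i < r)%nat}.

Definition prod_open {X : Type} (d : X -> X -> R) (r : nat)
  (W : (idx r -> X) -> Prop) : Prop :=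
  forall p, W p -> exists eps, 0 < eps /\
    forall q, (forall i, d (p i) (q i) < eps) -> W q.

Definition a_transitive {X : Type} (d : X -> X -> R) (f : X -> X)
  (r : nat) (a : idx r -> nat) : Prop :=
  transitive_top (prod_open d r) (fun p i => iter (a i) f (p i)).

Definition family := (nat -> Prop) -> Prop.

Definition Nhit {X : Type} (f : X -> X) (x : X) (U : X -> Prop) : nat -> Prop :=
  fun n => (1 <= n)%nat /\ U (iter n f x).

Definition diffset (F : nat -> Prop) : nat -> Prop :=
  fun m => exists a b, F a /\ F b /\ (b < a)%nat /\ m = (a - b)%nat.

Definition nabla (Fam : family) : family := fun F => Fam (diffset F).

Definition Fa (r : nat) (a : idx r -> nat) : family :=
  fun F => forall n : idx r -> nat, exists k, (1 <= k)%nat /\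
    forall i, F (k * a i + n i)%nat.

Definition omega {X : Type} (d : X -> X -> R) (f : X -> X) (x : X) : X -> Prop :=
  fun y => forall eps N, 0 < eps -> exists n, (N <= n)%nat /\ d (iter n f x) y < eps.

Definition Trans {X : Type} (d : X -> X -> R) (f : X -> X) : X -> Prop :=
  fun x => forall y, omega d f x y.

Definition TransF {X : Type} (d : X -> X -> R) (f : X -> X) (Fam : family) : X -> Prop :=
  fun x => forall U, mopen d U -> (exists y, U y) -> Fam (Nhit f x U).

Definition F_point_transitive {X : Type} (d : X -> X -> R) (f : X -> X) (Fam : family) : Prop :=
  exists x, TransF d f Fam x.

(* The argument rests on four facts, established in this order.
   - A ∇(F[a])-transitive point x produces the a-transitivity pattern: given
     boxes U_1 x ... x U_r and V_1 x ... x V_r, pick visiting times l_i <= m_i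
     of x to V_i and U_i; the set O of points y with f^{m_i} y in U_i and
     f^{l_i} y in V_i is an open neighbourhood of x, and a solution
     k a_i + (m_i - l_i) = s_i - t_i with s_i, t_i in N(x,O) gives the
     point (f^{m_i + t_i} x)_i of the first box whose f^{k a_i} image lies in
     the second.  Hence (2) implies (1).
   - Such a point is in particular a transitive point (take n constant).
   - Under (1), every transitive point x is ∇(F[a])-transitive: a-transitivity
     applied to U^r and to prod_i f^{-n_i} U yields k and points z_i in U with
     f^{k a_i + n_i} z_i in U, and every such return time is a difference of
     two visiting times of x to U.
   - A transitive compact metric system has a transitive point: a
     Baire-category argument by nested closed balls over a countable ball
     base, using compactness for the non-empty intersection. *)

From Stdlib Require Import Reals Arith Lia Lra List Cantor ClassicalEpsilon.
Open Scope R_scope.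

Lemma iter_add {X : Type} (f : X -> X) (m n : nat) (x : X) :
  iter (m + n) f x = iter m f (iter n f x).
Proof. unfold iter; induction m as [|m IH]; simpl; [reflexivity | now rewrite IH]. Qed.

Lemma iter_product_map {X I : Type} (f : X -> X) (a : I -> nat) (n : nat)
  (P : I -> X) (i : I) :
  iter n (fun p j => iter (a j) f (p j)) P i = iter (n * a i) f (P i).
Proof.
  induction n as [|n IH]; [reflexivity|].
  change (iter (a i) f (iter n (fun p j => iter (a j) f (p j)) P i)
          = iter (S n * a i) f (P i)).
  now rewrite IH, <- iter_add.
Qed.

Lemma idx_lower_bound (r : nat) (e : idx r -> R) :
  (forall j, 0 < e j) -> exists e0, 0 < e0 /\ forall j, e0 <= e j.
Proof.
  intros He.
  assert (Hn : forall n, exists e0, 0 < e0 /\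
                 forall j, (proj1_sig j < n)%nat -> e0 <= e j).
  { induction n as [|n [e1 [He1 H1]]].
    - exists 1; split; [lra | intros j Hj; lia].
    - destruct (lt_dec n r) as [Hnr | Hnr].
      + exists (Rmin e1 (e (exist _ n Hnr))).
        split; [apply Rmin_glb_lt; [exact He1 | apply He] |].
        intros [i Hi] Hin; simpl in Hin.
        destruct (Nat.eq_dec i n) as [-> | Hin'].
        * rewrite (Peano_dec.le_unique _ _ Hi Hnr); apply Rmin_r.
        * eapply Rle_trans; [apply Rmin_l | apply (H1 (exist _ i Hi)); simpl; lia].
      + exists e1; split; [exact He1 |].
        intros [i Hi] Hin; apply H1; simpl in *; lia. }
  destruct (Hn r) as [e0 [He0 H0]].
  exists e0; split; [exact He0 | intros j; apply H0, proj2_sig].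
Qed.

Section MetricSpace.
Context {X : Type} (d : X -> X -> R) (Hd : is_metric d).

Lemma dist_self (x : X) : d x x = 0.
Proof. destruct Hd as [_ [Hz _]]. now apply Hz. Qed.

Lemma dist_sym (x y : X) : d x y = d y x.
Proof. destruct Hd as [_ [_ [Hs _]]]. apply Hs. Qed.

Lemma dist_triangle (x y z : X) : d x z <= d x y + d y z.
Proof. destruct Hd as [_ [_ [_ Ht]]]. apply Ht. Qed.

Lemma ball_center (c : X) (e : R) : 0 < e -> d c c < e.
Proof. now rewrite dist_self. Qed.

Lemma mopen_ball (c : X) (e : R) : mopen d (fun y => d c y < e).
Proof.
  intros x Hx. exists (e - d c x); split; [lra|].
  intros y Hy. pose proof (dist_triangle c x y); lra.
Qed.

Lemma mopen_inter (U V : X -> Prop) :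
  mopen d U -> mopen d V -> mopen d (fun y => U y /\ V y).
Proof.
  intros HU HV x [Ux Vx].
  destruct (HU _ Ux) as [e1 [He1 H1]]. destruct (HV _ Vx) as [e2 [He2 H2]].
  exists (Rmin e1 e2); split; [now apply Rmin_glb_lt|].
  intros y Hy; split; [apply H1 | apply H2]; eapply Rlt_le_trans; eauto;
    [apply Rmin_l | apply Rmin_r].
Qed.

Lemma mcontinuous_iter (f : X -> X) (n : nat) :
  mcontinuous d f -> mcontinuous d (iter n f).
Proof.
  intros Hf; induction n as [|n IH]; intros x eps He.
  - exists eps; split; [lra | intros y Hy; exact Hy].
  - destruct (Hf (iter n f x) eps He) as [d1 [Hd1 H1]].
    destruct (IH x d1 Hd1) as [d2 [Hd2 H2]].
    exists d2; split; [lra|]. intros y Hy. apply H1, H2, Hy.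
Qed.

Lemma mopen_preimage (g : X -> X) (U : X -> Prop) :
  mcontinuous d g -> mopen d U -> mopen d (fun y => U (g y)).
Proof.
  intros Hg HU x Hx. destruct (HU _ Hx) as [e [He H]].
  destruct (Hg x e He) as [dl [Hdl H2]]. exists dl; split; auto.
Qed.

Lemma common_radius (r : nat) (O : idx r -> X -> Prop) (P : idx r -> X) :
  (forall i, mopen d (O i)) -> (forall i, O i (P i)) ->
  exists e, 0 < e /\ forall i w, d (P i) w < e -> O i w.
Proof.
  intros HO HP.
  destruct (choice (fun i e => 0 < e /\ forall w, d (P i) w < e -> O i w))
    as [eps Heps].
  { intros i. exact (HO i (P i) (HP i)). }
  destruct (idx_lower_bound r eps) as [e [He Hle]]; [apply Heps|].
  exists e; split; [exact He|].
  intros i w Hw. apply Heps. specialize (Hle i); lra.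
Qed.

Lemma mopen_finite_inter (r : nat) (O : idx r -> X -> Prop) :
  (forall i, mopen d (O i)) -> mopen d (fun y => forall i, O i y).
Proof.
  intros HO y Hy.
  destruct (common_radius r O (fun _ => y) HO Hy) as [e [He H]].
  exists e; split; [exact He|]. intros w Hw i. now apply H.
Qed.

Lemma prod_open_box (r : nat) (O : idx r -> X -> Prop) :
  (forall i, mopen d (O i)) -> prod_open d r (fun P => forall i, O i (P i)).
Proof.
  intros HO P HP. destruct (common_radius r O P HO HP) as [e [He H]].
  exists e; split; [exact He|]. intros q Hq i. now apply H.
Qed.

Lemma nested_closed_balls_meet (Hc : mcompact d) (c : nat -> X) (rho : nat -> R) :
  (forall j, 0 <= rho j) ->
  (forall j w, d (c (S j)) w <= rho (S j) -> d (c j) w <= rho j) ->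
  exists x, forall j, d (c j) x <= rho j.
Proof.
  intros Hrho Hnest.
  assert (Hdecr : forall i j w, (i <= j)%nat ->
                    d (c j) w <= rho j -> d (c i) w <= rho i).
  { intros i j w Hij. induction Hij; auto. }
  apply NNPP; intros Hnone.
  destruct (Hc nat (fun j w => rho j < d (c j) w)) as [l Hl].
  - intros j w Hw. exists (d (c j) w - rho j); split; [lra|].
    intros v Hv. pose proof (dist_triangle (c j) v w).
    rewrite (dist_sym v w) in H. lra.
  - intros w. apply NNPP; intros Hw. apply Hnone. exists w. intros j.
    apply Rnot_lt_le. intros Hj. apply Hw; eauto.
  - destruct (Hl (c (list_max l))) as [j [Hjl Hj]].
    assert (Hjmax : (j <= list_max l)%nat).
    { apply (proj1 (Forall_forall _ l) (proj1 (list_max_le l _) (le_n _)) j Hjl). }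
    assert (d (c j) (c (list_max l)) <= rho j).
    { apply (Hdecr j (list_max l)); [exact Hjmax|]. now rewrite dist_self. }
    lra.
Qed.

(* Compactness gives a countable family of balls of positive radius forming a
   neighbourhood base at every point: finite 1/(m+1)-nets, enumerated. *)
Lemma countable_ball_base (Hne : inhabited X) (Hc : mcompact d) :
  exists (c : nat -> X) (rho : nat -> R), (forall j, 0 < rho j) /\
    forall y eps, 0 < eps -> exists j, forall w, d (c j) w < rho j -> d y w < eps.
Proof.
  destruct Hne as [x0].
  assert (Hrad : forall m : nat, 0 < / INR (S m)).
  { intros m. apply Rinv_0_lt_compat, lt_0_INR; lia. }
  destruct (choice (fun (m : nat) (L : list X) =>
              forall y, exists c, In c L /\ d c y < / INR (S m))) as [net Hnet].
  { intros m. apply (Hc X (fun c y => d c y < / INR (S m))).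
    - intros c; apply mopen_ball.
    - intros y; exists y. now apply ball_center. }
  exists (fun j => nth (snd (of_nat j)) (net (fst (of_nat j))) x0),
         (fun j => / INR (S (fst (of_nat j)))).
  split; [intros j; apply Hrad|].
  intros y eps Heps.
  destruct (archimed_cor1 (eps / 2)) as [M [HM HM0]]; [lra|].
  destruct (Hnet (pred M) y) as [c [Hc1 Hc2]].
  destruct (In_nth _ _ x0 Hc1) as [k [_ Hk]].
  exists (to_nat (pred M, k)). rewrite cancel_of_to; cbn [fst snd]. rewrite Hk.
  replace (S (pred M)) with M in * by lia.
  intros w Hw. pose proof (dist_triangle y c w). rewrite (dist_sym y c) in H. lra.
Qed.

Lemma point_meeting_requirements (Hne : inhabited X) (Hc : mcompact d)
  (Q : nat -> X -> Prop) :
  (forall j p rho, 0 < rho -> exists p' rho', 0 < rho' /\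
     forall w, d p' w <= rho' -> d p w < rho /\ Q j w) ->
  exists x, forall j, Q j x.
Proof.
  intros Hstep. destruct Hne as [x0].
  destruct (choice (fun (js : nat * (X * R)) (s' : X * R) =>
              0 < snd (snd js) -> 0 < snd s' /\
              forall w, d (fst s') w <= snd s' ->
                d (fst (snd js)) w < snd (snd js) /\ Q (fst js) w)) as [g Hg].
  { intros [j [p rho]]. destruct (Rlt_dec 0 rho) as [Hr | Hr].
    - destruct (Hstep j p rho Hr) as [p' [rho' H]]. now exists (p', rho').
    - exists (p, rho). simpl; intros; contradiction. }
  set (ball := fix ball (j : nat) : X * R :=
         match j with O => (x0, 1) | S j => g (j, ball j) end).
  assert (Hpos : forall j, 0 < snd (ball j)).
  { induction j; simpl; [lra|]. apply (Hg (j, ball j) IHj). }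
  assert (Hinside : forall j w, d (fst (ball (S j))) w <= snd (ball (S j)) ->
                      d (fst (ball j)) w < snd (ball j) /\ Q j w).
  { intros j. apply (Hg (j, ball j) (Hpos j)). }
  destruct (nested_closed_balls_meet Hc (fun j => fst (ball j)) (fun j => snd (ball j)))
    as [x Hx].
  - intros j; left; apply Hpos.
  - intros j w Hw. left. now apply Hinside.
  - exists x. intros j. now apply Hinside.
Qed.

End MetricSpace.

Section Dynamics.
Context {X : Type} (d : X -> X -> R) (Hd : is_metric d) (f : X -> X)
  (Hf : mcontinuous d f).

Definition transitive_after : Prop :=
  forall U V, mopen d U -> mopen d V -> (exists y, U y) -> (exists y, V y) ->
  forall N, exists n, (N <= n)%nat /\ exists z, U z /\ V (iter n f z).

(* Transfer times of a transitive system are unbounded: a transfer from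
   {z in U | f^n z in V} to itself adds to a transfer time n. *)
Lemma transitive_after_of_transitive :
  transitive_top (mopen d) f -> transitive_after.
Proof.
  intros HT U V HU HV HUn HVn N. induction N as [|N [n [Hn [z [Hz1 Hz2]]]]].
  - destruct (HT U V HU HV HUn HVn) as [n [_ Hn]]. exists n; split; [lia | exact Hn].
  - set (W := fun y => U y /\ V (iter n f y)).
    assert (HW : mopen d W).
    { apply mopen_inter; [exact HU|]. apply mopen_preimage; [|exact HV].
      now apply mcontinuous_iter. }
    destruct (HT W W HW HW (ex_intro _ z (conj Hz1 Hz2)) (ex_intro _ z (conj Hz1 Hz2)))
      as [m [Hm [y [[Hy1 _] [_ Hy2]]]]].
    exists (n + m)%nat. split; [lia|]. exists y; split; [exact Hy1|].
    now rewrite iter_add.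
Qed.

Lemma closed_ball_entering (HT : transitive_after) (p : X) (rho : R)
  (O : X -> Prop) (N : nat) :
  0 < rho -> mopen d O -> (exists y, O y) ->
  exists p' rho', 0 < rho' /\ forall w, d p' w <= rho' ->
    d p w < rho /\ exists t, (N <= t)%nat /\ O (iter t f w).
Proof.
  intros Hrho HO HOn.
  destruct (HT (fun w => d p w < rho) O (mopen_ball d Hd p rho) HO
              (ex_intro _ p (ball_center d Hd p rho Hrho)) HOn N)
    as [n [Hn [z [Hz1 Hz2]]]].
  destruct (mopen_preimage d _ _ (mcontinuous_iter d f n Hf) HO z Hz2)
    as [dl [Hdl Hdl2]].
  set (s := Rmin dl (rho - d p z)).
  assert (s <= dl) by apply Rmin_l.
  assert (s <= rho - d p z) by apply Rmin_r.
  assert (0 < s) by (apply Rmin_glb_lt; lra).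
  exists z, (s / 2). split; [lra|]. intros w Hw. split.
  - pose proof (dist_triangle d Hd p z w). lra.
  - exists n; split; [exact Hn|]. apply Hdl2. lra.
Qed.

Lemma transitive_point_exists (Hne : inhabited X) (Hc : mcompact d) :
  transitive_after -> exists x, Trans d f x.
Proof.
  intros HT.
  destruct (countable_ball_base d Hd Hne Hc) as [c [rho [Hrho Hbase]]].
  destruct (point_meeting_requirements d Hd Hne Hc
              (fun j w => exists t, (snd (of_nat j) <= t)%nat /\
                 d (c (fst (of_nat j))) (iter t f w) < rho (fst (of_nat j))))
    as [x Hx].
  { intros j p e He.
    apply (closed_ball_entering HT p e
             (fun v => d (c (fst (of_nat j))) v < rho (fst (of_nat j))) (snd (of_nat j)) He).
    - apply mopen_ball, Hd.
    - exists (c (fst (of_nat j))). now apply ball_center. }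
  exists x. intros y eps N Heps.
  destruct (Hbase y eps Heps) as [i Hi].
  destruct (Hx (to_nat (i, N))) as [t [Ht Hct]]. rewrite cancel_of_to in *.
  exists t; split; [exact Ht|]. rewrite (dist_sym d Hd). now apply Hi.
Qed.

Lemma trans_point_visits (x : X) (U : X -> Prop) (y : X) :
  Trans d f x -> mopen d U -> U y ->
  forall N, exists t, (N <= t)%nat /\ U (iter t f x).
Proof.
  intros HT HU Hy N. destruct (HU y Hy) as [e [He H]].
  destruct (HT y e N He) as [n [Hn Hdn]]. exists n; split; [exact Hn|].
  apply H. now rewrite (dist_sym d Hd).
Qed.

Lemma return_time_in_diffset (x : X) (U : X -> Prop) (z : X) (m : nat) :
  Trans d f x -> mopen d U -> U z -> U (iter m f z) -> (1 <= m)%nat ->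
  diffset (Nhit f x U) m.
Proof.
  intros HT HU Hz Hmz Hm.
  assert (HW : mopen d (fun w => U w /\ U (iter m f w))).
  { apply mopen_inter; [exact HU|]. apply mopen_preimage; [|exact HU].
    now apply mcontinuous_iter. }
  destruct (trans_point_visits x _ z HT HW (conj Hz Hmz) 1%nat) as [t [Ht [H1 H2]]].
  exists (m + t)%nat, t. split; [split; [lia | now rewrite iter_add]|].
  split; [split; auto|]. split; lia.
Qed.

Section ProductTransitivity.
Variables (r : nat) (a : idx r -> nat).

(* a-transitivity implies transitivity: read off the first coordinate of a
   transfer between the diagonal boxes U^r and V^r. *)
Lemma a_transitive_transitive (Hr : (1 <= r)%nat) (Ha : forall i, (1 <= a i)%nat) :
  a_transitive d f r a -> transitive_top (mopen d) f.
Proof.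
  intros HA U V HU HV [u Hu] [v Hv].
  destruct (HA (fun P => forall i, U (P i)) (fun P => forall i, V (P i)))
    as [k [Hk [P [HP1 HP2]]]];
    [apply prod_open_box; auto | apply prod_open_box; auto
    | exists (fun _ => u); auto | exists (fun _ => v); auto |].
  set (i0 := exist (fun i => (i < r)%nat) 0%nat Hr).
  exists (k * a i0)%nat. split; [specialize (Ha i0); nia|].
  exists (P i0); split; [apply HP1|]. rewrite <- iter_product_map. apply HP2.
Qed.

Lemma trans_point_nabla (Ha : forall i, (1 <= a i)%nat) (x : X) :
  a_transitive d f r a -> Trans d f x -> TransF d f (nabla (Fa r a)) x.
Proof.
  intros HA HT U HU [y Hy] n.
  destruct (choice (fun i z => U (iter (n i) f z))) as [z Hz].
  { intros i. destruct (trans_point_visits x U y HT HU Hy (n i)) as [t [Ht Hu]].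
    exists (iter (t - n i) f x). rewrite <- iter_add.
    now replace (n i + (t - n i))%nat with t by lia. }
  destruct (HA (fun P => forall i, U (P i))
               (fun P => forall i, U (iter (n i) f (P i)))) as [k [Hk [P [HP1 HP2]]]].
  - now apply prod_open_box.
  - apply (prod_open_box d r (fun i w => U (iter (n i) f w))). intros i.
    apply mopen_preimage; [now apply mcontinuous_iter | exact HU].
  - exists (fun _ => y); auto.
  - exists z; auto.
  - exists k; split; [exact Hk|]. intros i.
    specialize (HP2 i). rewrite iter_product_map, <- iter_add in HP2.
    apply (return_time_in_diffset x U (P i)); auto.
    + now rewrite Nat.add_comm.
    + specialize (Ha i). nia.
Qed.

(* A ∇(F[a])-transitive point enters every non-empty open set at
   arbitrarily late times (take n constant in the definition of F[a]). *)
Lemma nabla_point_visits (Hr : (1 <= r)%nat) (x : X) (U : X -> Prop) :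
  TransF d f (nabla (Fa r a)) x -> mopen d U -> (exists y, U y) ->
  forall M, exists n, (M <= n)%nat /\ U (iter n f x).
Proof.
  intros HT HU HUn M.
  destruct (HT U HU HUn (fun _ => M)) as [k [_ Hk]].
  destruct (Hk (exist _ 0%nat Hr)) as [s [t [[_ Hs] [_ [_ Heq]]]]].
  exists s. split; [lia | exact Hs].
Qed.

Lemma nabla_point_trans (Hr : (1 <= r)%nat) (x : X) :
  TransF d f (nabla (Fa r a)) x -> Trans d f x.
Proof.
  intros HT y eps N He.
  destruct (nabla_point_visits Hr x (fun w => d y w < eps) HT (mopen_ball d Hd y eps)
              (ex_intro _ y (ball_center d Hd y eps He)) N) as [n [Hn Hu]].
  exists n; split; [exact Hn|]. now rewrite (dist_sym d Hd).
Qed.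

Lemma nabla_point_boxes (Hr : (1 <= r)%nat) (x : X) (U V : idx r -> X -> Prop) :
  TransF d f (nabla (Fa r a)) x ->
  (forall i, mopen d (U i)) -> (forall i, mopen d (V i)) ->
  (forall i, exists y, U i y) -> (forall i, exists y, V i y) ->
  exists k, (1 <= k)%nat /\ exists P : idx r -> X,
    forall i, U i (P i) /\ V i (iter (k * a i) f (P i)).
Proof.
  intros HT HU HV HUn HVn.
  destruct (choice (fun i l => V i (iter l f x))) as [l Hl].
  { intros i. destruct (nabla_point_visits Hr x (V i) HT (HV i) (HVn i) 0) as [n [_ Hn]].
    now exists n. }
  destruct (choice (fun i m => (l i <= m)%nat /\ U i (iter m f x))) as [m Hm].
  { intros i. exact (nabla_point_visits Hr x (U i) HT (HU i) (HUn i) (l i)). }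
  set (O := fun y => forall i, U i (iter (m i) f y) /\ V i (iter (l i) f y)).
  assert (HO : mopen d O).
  { apply mopen_finite_inter. intros i.
    apply mopen_inter; apply mopen_preimage; auto using mcontinuous_iter. }
  assert (Ox : O x) by (intros i; split; [apply Hm | apply Hl]).
  destruct (HT O HO (ex_intro _ x Ox) (fun i => (m i - l i)%nat)) as [k [Hk Hks]].
  destruct (choice (fun i st => Nhit f x O (fst st) /\ Nhit f x O (snd st) /\
              (snd st < fst st)%nat /\
              (k * a i + (m i - l i))%nat = (fst st - snd st)%nat)) as [st Hst].
  { intros i. destruct (Hks i) as [s [t H]]. now exists (s, t). }
  exists k; split; [exact Hk|]. exists (fun i => iter (m i + snd (st i)) f x).
  intros i. destruct (Hst i) as [[_ Hs] [[_ Ht] [Hlt Heq]]]. split.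
  - rewrite iter_add. apply (Ht i).
  - rewrite <- iter_add.
    replace (k * a i + (m i + snd (st i)))%nat with (l i + fst (st i))%nat
      by (destruct (Hm i); lia).
    rewrite iter_add. apply (Hs i).
Qed.

Lemma nabla_point_a_transitive (Hr : (1 <= r)%nat) (x : X) :
  TransF d f (nabla (Fa r a)) x -> a_transitive d f r a.
Proof.
  intros HT W1 W2 HW1 HW2 [p Hp] [q Hq].
  destruct (HW1 p Hp) as [e1 [He1 H1]]. destruct (HW2 q Hq) as [e2 [He2 H2]].
  destruct (nabla_point_boxes Hr x (fun i w => d (p i) w < e1) (fun i w => d (q i) w < e2) HT
              (fun i => mopen_ball d Hd (p i) e1) (fun i => mopen_ball d Hd (q i) e2)
              (fun i => ex_intro _ (p i) (ball_center d Hd (p i) e1 He1))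
              (fun i => ex_intro _ (q i) (ball_center d Hd (q i) e2 He2)))
    as [k [Hk [P HP]]].
  exists k; split; [exact Hk|]. exists P; split.
  - apply H1. intros i. apply HP.
  - apply H2. intros i. rewrite iter_product_map. apply HP.
Qed.

End ProductTransitivity.
End Dynamics.

Theorem theorem4p7 (X : Type) (d : X -> X -> R) (f : X -> X)
  (Hne : inhabited X) (Hd : is_metric d) (Hc : mcompact d) (Hf : mcontinuous d f)
  (r : nat) (Hr : (1 <= r)%nat) (a : idx r -> nat) (Ha : forall i, (1 <= a i)%nat) :
  (a_transitive d f r a <-> F_point_transitive d f (nabla (Fa r a))) /\
  (F_point_transitive d f (nabla (Fa r a)) <->
     ((forall x, Trans d f x <-> TransF d f (nabla (Fa r a)) x) /\ exists x, Trans d f x)).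
Proof.
  assert (H21 : F_point_transitive d f (nabla (Fa r a)) -> a_transitive d f r a)
    by (intros [x Hx]; exact (nabla_point_a_transitive d Hd f Hf r a Hr x Hx)).
  assert (H12 : a_transitive d f r a -> F_point_transitive d f (nabla (Fa r a))).
  { intros HA.
    destruct (transitive_point_exists d Hd f Hf Hne Hc) as [x Hx].
    - exact (transitive_after_of_transitive d f Hf
               (a_transitive_transitive d f r a Hr Ha HA)).
    - exists x. exact (trans_point_nabla d Hd f Hf r a Ha x HA Hx). }
  split; [tauto|]. split.
  - intros H2. split.
    + intros x; split.
      * exact (trans_point_nabla d Hd f Hf r a Ha x (H21 H2)).
      * exact (nabla_point_trans d Hd f r a Hr x).
    + destruct H2 as [x Hx]. exists x. exact (nabla_point_trans d Hd f r a Hr x Hx).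
  - intros [Heq [x Hx]]. exists x. now apply Heq.
Qed.
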